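(* Let $\bar Q$ be a locally gentle bound quiver, let $F$ be a finite face of the non-kissing complex $\mathcal K_{nk}(\bar Q)$ and let $\alpha$ be an arrow of $Q^{\mathrm{bl}}$. Then the set $F_\alpha$ of walks of $F$ marked at an occurrence of $\alpha^{\pm1}$ is either empty or has a maximal element for the countercurrent order $\prec_\alpha$.
   Context: Locally gentle bound quiver $\bar Q=(Q,I)$: $Q$ finite, $I$ an ideal of $kQ$ generated by paths of length two ($kQ/I$ possibly infinite-dimensional), each vertex with at most two incoming and two outgoing arrows, and for each arrow $\beta$ at most one $\alpha$ with $t(\alpha)=s(\beta)$, $\alpha\beta\notin I$, at most one with $\alpha\beta\in I$, and symmetrically on the outgoing side. $\bar Q^{\mathrm{bl}}$ adds degree-one blossom vertices and arrows so each vertex of $Q_0$ has two incoming and two outgoing arrows, relations completed to stay locally gentle. A walk is a maximal (finite, or eventually cyclic ${}^\infty(c_1^{\varepsilon_1})\sigma(c_2^{\varepsilon_2})^\infty$ with $c_i$ oriented cycles, possibly trivial) string of $\bar Q^{\mathrm{bl}}$, a string being a composable reduced word in arrows and formal inverses with no factor $\pi^{\pm1}$ for a path $\pi\in I$; $\omega\equiv\omega^{-1}$. For $\omega=\prod_{i<\ell<j}\alpha_\ell^{\varepsilon_\ell}$, a substring $\prod_{i'<\ell<j'}\alpha_\ell^{\varepsilon_\ell}$ ($i\le i'<j'\le j$, strict at finite ends, remembered with its position) is on top if ($i'=-\infty$ or $\varepsilon_{i'}=-1$) and ($j'=\infty$ or $\varepsilon_{j'}=1$), at the bottom if ($i'=-\infty$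 or $\varepsilon_{i'}=1$) and ($j'=\infty$ or $\varepsilon_{j'}=-1$). $\omega$ kisses $\omega'$ if a finite string is a top substring of $\omega$ and a bottom substring of $\omega'$. Faces of $\mathcal K_{nk}(\bar Q)$ are sets of pairwise non-kissing walks (none kissing itself). A marked walk is a walk together with a marked occurrence of an arrow $\alpha^{\pm1}$ in it; for an infinite straight walk ${}^\infty c^\infty$ all markings at occurrences of $\alpha^{\pm1}$ are considered equal. Countercurrent order: for two distinct non-kissing walks $\mu_\star,\nu_\star$ marked at occurrences of $\alpha^{\pm1}$, let $\sigma$ be their maximal common substring containing the marked occurrence; they split at an endpoint of $\sigma$, and $\mu_\star\prec_\alpha\nu_\star$ if $\mu_\star$ enters and/or exits $\sigma$ in the direction pointed by $\alpha$ while $\nu_\star$ enters and/or exits $\sigma$ in the direction opposite to $\alpha$. *)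

From Stdlib Require Import ZArith List.
From HB Require Import structures.
From mathcomp Require Import all_boot.

Set Implicit Arguments.
Unset Strict Implicit.
Unset Printing Implicit Defensive.

(* Bound quivers whose ideal is generated by paths of length two.          *)
(* [rel a b] means that the length-two path  a b  (first a, then b,        *)
(* tgt a = src b) belongs to I.                                            *)
Record bquiver := BQuiver {
  vert : finType;
  arr  : finType;
  src  : arr -> vert;
  tgt  : arr -> vert;
  rel  : arr -> arr -> bool
}.

Definition indeg (Q : bquiver) (v : vert Q) := #|[set a : arr Q | tgt a == v]|.
Definition outdeg (Q : bquiver) (v : vert Q) := #|[set a : arr Q | src a == v]|.

Definition locally_gentle (Q : bquiver) : Prop :=
  (forall a b : arr Q, rel a b -> tgt a = src b) /\
  (forall v : vert Q, indeg v <= 2 /\ outdeg v <= 2) /\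
  (forall b : arr Q,
      #|[set a : arr Q | (tgt a == src b) && ~~ rel a b]| <= 1 /\
      #|[set a : arr Q | (tgt a == src b) && rel a b]| <= 1) /\
  (forall a : arr Q,
      #|[set b : arr Q | (src b == tgt a) && ~~ rel a b]| <= 1 /\
      #|[set b : arr Q | (src b == tgt a) && rel a b]| <= 1).

Definition is_blossoming (Q Qbl : bquiver)
    (iv : vert Q -> vert Qbl) (ia : arr Q -> arr Qbl) : Prop :=
  injective iv /\ injective ia /\
  (forall a, src (ia a) = iv (src a)) /\
  (forall a, tgt (ia a) = iv (tgt a)) /\
  (forall a b, rel (ia a) (ia b) = rel a b) /\
  (forall v, indeg (iv v) = 2 /\ outdeg (iv v) = 2) /\
  (forall w : vert Qbl, (forall v, iv v <> w) -> indeg w + outdeg w = 1) /\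
  (forall b : arr Qbl, (forall a, ia a <> b) ->
      ((exists v, iv v = src b) /\ (forall v, iv v <> tgt b)) \/
      ((exists v, iv v = tgt b) /\ (forall v, iv v <> src b))) /\
  locally_gentle Qbl.

(* A letter is (a, true) for the arrow a and (a, false) for a^{-1}.        *)
Section Walks.
Variable B : bquiver.

Definition letter := (arr B * bool)%type.
Definition lsrc (x : letter) : vert B := if x.2 then src x.1 else tgt x.1.
Definition ltgt (x : letter) : vert B := if x.2 then tgt x.1 else src x.1.
Definition linv (x : letter) : letter := (x.1, ~~ x.2).

(* x followed by y is a (reduced, relation-free) string of length two *)
Definition compat (x y : letter) : bool :=
  [&& ltgt x == lsrc y,
      ~~ ((x.1 == y.1) && (x.2 != y.2)),
      ~~ [&& x.2, y.2 & rel x.1 y.1] &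
      ~~ [&& ~~ x.2, ~~ y.2 & rel y.1 x.1]].

(* A (possibly infinite) word  prod_{lo < l < hi} wl l, where None stands
   for -oo (for lo) or +oo (for hi). *)
Record walk := Walk { wlo : option Z; whi : option Z; wl : Z -> letter }.

Definition lbd (o : option Z) (l : Z) : Prop :=
  match o with None => True | Some i => (i < l)%Z end.
Definition ubd (o : option Z) (l : Z) : Prop :=
  match o with None => True | Some j => (l < j)%Z end.
Definition in_dom (w : walk) (l : Z) : Prop := lbd (wlo w) l /\ ubd (whi w) l.

(* w is a walk of B: a maximal string, each infinite end being eventually
   an oriented cycle c^{+-1} repeated forever. *)
Definition is_walk (w : walk) : Prop :=
  (exists l, in_dom w l) /\
  (forall l, in_dom w l -> in_dom w (l + 1) -> compat (wl w l) (wl w (l + 1))) /\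
  (forall j, whi w = Some j -> forall y, ~~ compat (wl w (j - 1)) y) /\
  (forall i, wlo w = Some i -> forall x, ~~ compat x (wl w (i + 1))) /\
  (whi w = None -> exists N p, in_dom w N /\ (0 < p)%Z /\
     forall l, (N <= l)%Z -> wl w (l + p) = wl w l /\ (wl w l).2 = (wl w N).2) /\
  (wlo w = None -> exists N p, in_dom w N /\ (0 < p)%Z /\
     forall l, (l <= N)%Z -> wl w (l - p) = wl w l /\ (wl w l).2 = (wl w N).2).

(* finite substrings prod_{i < l < j} (remembered with position) *)
Definition top_sub (w : walk) (i j : Z) : Prop :=
  in_dom w i /\ in_dom w j /\ (i < j)%Z /\ (wl w i).2 = false /\ (wl w j).2 = true.
Definition bot_sub (w : walk) (i j : Z) : Prop :=
  in_dom w i /\ in_dom w j /\ (i < j)%Z /\ (wl w i).2 = true /\ (wl w j).2 = false.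

Definition sstr (w : walk) (i j : Z) : vert B * seq letter :=
  (ltgt (wl w i),
   [seq wl w (i + 1 + Z.of_nat k) | k <- iota 0 (Z.to_nat (j - i - 1))]).
Definition rstr (w : walk) (i j : Z) : vert B * seq letter :=
  (lsrc (wl w j), rev (map linv (sstr w i j).2)).

Definition kisses (w w' : walk) : Prop :=
  exists i j k m, top_sub w i j /\ bot_sub w' k m /\
    (sstr w i j = sstr w' k m \/ sstr w i j = rstr w' k m).

Definition is_face (F : seq walk) : Prop :=
  (forall w, List.In w F -> is_walk w) /\
  (forall w w', List.In w F -> List.In w' F -> ~ kisses w w').

(* Marked walks.  A walk marked at an occurrence (position p) of a^{+-1} is
   normalised by reading it so that the marked letter is the direct letter
   a, placed at position 0. *)
Definition center (w : walk) (p : Z) : walk :=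
  if (wl w p).2 then
    Walk (omap (fun i => i - p)%Z (wlo w)) (omap (fun j => j - p)%Z (whi w))
         (fun l => wl w (p + l)%Z)
  else
    Walk (omap (fun j => p - j)%Z (whi w)) (omap (fun i => p - i)%Z (wlo w))
         (fun l => linv (wl w (p - l)%Z)).

Definition marked_in (F : seq walk) (a : arr B) (m : walk) : Prop :=
  exists w p, List.In w F /\ in_dom w p /\ (wl w p).1 = a /\ m = center w p.

(* equality of marked walks; markings of an infinite straight walk
   (bi-infinite, all letters in the same direction) are all identified *)
Definition meq (mu nu : walk) : Prop :=
  (wlo mu = wlo nu /\ whi mu = whi nu /\
     forall l, in_dom mu l -> wl mu l = wl nu l) \/
  (wlo mu = None /\ whi mu = None /\ wlo nu = None /\ whi nu = None /\
   (forall l, (wl mu l).2 = true) /\ (forall l, (wl nu l).2 = true) /\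
   exists k, forall l, wl mu l = wl nu (l + k)%Z).

Definition agree (mu nu : walk) (l : Z) : Prop :=
  in_dom mu l /\ in_dom nu l /\ wl mu l = wl nu l.

(* the maximal common substring sigma containing position 0 ends just before
   position R > 0, where the two walks continue with different letters *)
Definition split_right (mu nu : walk) (R : Z) : Prop :=
  (0 < R)%Z /\ (forall k, (0 <= k < R)%Z -> agree mu nu k) /\
  in_dom mu R /\ in_dom nu R /\ wl mu R <> wl nu R.
Definition split_left (mu nu : walk) (L : Z) : Prop :=
  (L < 0)%Z /\ (forall k, (L < k <= 0)%Z -> agree mu nu k) /\
  in_dom mu L /\ in_dom nu L /\ wl mu L <> wl nu L.

(* countercurrent order: with sigma read so that a points forward, mu enters
   and/or exits sigma along a direct letter (direction pointed by a) while
   nu does so along an inverse letter (direction opposite to a). *)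
Definition countercurrent (mu nu : walk) : Prop :=
  ~ meq mu nu /\
  ((exists R, split_right mu nu R) \/ (exists L, split_left mu nu L)) /\
  (forall R, split_right mu nu R -> (wl mu R).2 = true /\ (wl nu R).2 = false) /\
  (forall L, split_left mu nu L -> (wl mu L).2 = true /\ (wl nu L).2 = false).

End Walks.

From Stdlib Require Import ZArith List Lia Classical.
From HB Require Import structures.
From mathcomp Require Import all_boot.

(* Compare two walks marked at [a] by reading them away from the marked letter:
   on either side, x ⊑ y when x continues with a direct letter at the first place
   where the two walks split.  In a locally gentle quiver the two possible
   continuations of a letter have opposite orientations, which makes ⊑ transitive
   on marked walks, and x ≺_a y gives x ⊑ y but not y ⊑ x.  Along a periodic
   infinite end, moving the marking one period towards the finite part goes up
   for ⊑, so finitely many markings of the walks of F dominate all the others,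
   and a ⊑-maximal one among them is ≺_a-maximal. *)

Set Implicit Arguments.
Unset Strict Implicit.
Unset Printing Implicit Defensive.

Lemma card_le2_eq (T : finType) (A : {set T}) x y z :
  #|A| <= 2 -> x \in A -> y \in A -> z \in A -> x <> y -> x <> z -> y = z.
Proof.
move=> leA Ax Ay Az nxy nxz.
have /card_le1_eqP : #|A :\ x| <= 1 by move: leA; rewrite (cardsD1 x A) Ax.
by apply; rewrite !inE ?Ay ?Az andbT; apply/eqP => e; [apply: nxz | apply: nxy]; rewrite e.
Qed.

Section Letters.
Variable B : bquiver.
Implicit Types x y : letter B.

Lemma linvK : involutive (@linv B).
Proof. by case=> u d; rewrite /linv /= negbK. Qed.

Lemma compat_linv x y : compat x y = compat (linv y) (linv x).
Proof.
case: x => c dc; case: y => b db; rewrite /compat /linv /lsrc /ltgt /=.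
by case: dc; case: db => /=;
  rewrite ?(eq_sym c b) ?(eq_sym (tgt c)) ?(eq_sym (src c)) ?andbT ?andbF.
Qed.

Hypothesis gentle : locally_gentle B.

Lemma compat_next_opposite x y y' :
  compat x y -> compat x y' -> y <> y' -> y.2 <> y'.2.
Proof.
case: gentle => [_ [deg [gin gout]]].
case: x y y' => [c dc] [b d] [b' d'] cy cy' neq_yy' /= eq_d; subst d'.
apply: neq_yy'; congr pair; move: cy cy'; rewrite /compat /lsrc /ltgt /=.
case: dc; case: d => /and4P[/eqP e n r r'] /and4P[/eqP e' n' s s'];
  rewrite /= ?andbT in n r r' n' s s'.
- by apply: (card_le1_eqP (proj1 (gout c))); rewrite inE -?e -?e' eqxx.
- apply: (card_le2_eq (x := c) (proj1 (deg (tgt c)))); rewrite ?inE -?e -?e' //;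
    by move=> ec; rewrite ec eqxx in n n'.
- apply: (card_le2_eq (x := c) (proj2 (deg (src c)))); rewrite ?inE -?e -?e' //;
    by move=> ec; rewrite ec eqxx in n n'.
- by apply: (card_le1_eqP (proj1 (gin c))); rewrite inE -?e -?e' eqxx.
Qed.

Lemma compat_prev_opposite x y y' :
  compat y x -> compat y' x -> y <> y' -> y.2 <> y'.2.
Proof.
rewrite !(compat_linv _ x) => c c' neq_yy' eq_d.
apply: (compat_next_opposite c c'); first by move/(can_inj linvK).
by rewrite /linv /= eq_d.
Qed.

End Letters.

Local Open Scope Z_scope.

Lemma first_failure (P : Z -> Prop) n : 0 <= n -> P 0 ->
  (forall k, 0 <= k <= n -> P k) \/
  exists k, 0 <= k < n /\ (forall j, 0 <= j <= k -> P j) /\ ~ P (k + 1).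
Proof.
move=> + P0; move: n; apply: natlike_ind.
  by left=> k k0; have -> : k = 0 by lia.
move=> n n_ge0 [P_upto|[k [lt_kn [P_upto not_P]]]]; last by right; exists k; split=> //; lia.
case: (classic (P (Z.succ n))) => [P_n1|not_P].
  by left=> k k_le; case: (Z.eq_dec k (Z.succ n)) => [->|?] //; apply: P_upto; lia.
by right; exists n; split; [lia | split=> //; rewrite -Z.add_1_r in not_P].
Qed.

Lemma periodic_descent (G : Z -> Prop) (R : Z -> Z -> Prop) N P :
  0 < P -> (forall q, R q q) ->
  (forall q1 q2 q3, G q1 -> G q2 -> R q1 q2 -> R q2 q3 -> R q1 q3) ->
  (forall q, N + P <= q -> G q -> G (q - P) /\ R q (q - P)) ->
  forall q, N <= q -> G q -> exists p, N <= p < N + P /\ p <= q /\ G p /\ R q p.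
Proof.
move=> P_gt0 R_refl R_trans step q; elim/(well_founded_ind (Z.lt_wf N)): q => q IH le_Nq Gq.
case: (Z_lt_le_dec q (N + P)) => [lt_q|ge_q].
  by exists q; split; [lia | split; [lia | split]].
have [GqP RqP] := step q ge_q Gq.
have [p [p_bd [le_p [Gp RqPp]]]] := IH (q - P) ltac:(lia) ltac:(lia) GqP.
by exists p; split=> //; split; [lia | split=> //; apply: R_trans RqP RqPp].
Qed.

Lemma interval_image (T : Type) (G : Z -> Prop) (f : Z -> T) lo hi :
  exists S, (forall s, List.In s S -> exists p, G p /\ s = f p) /\
    forall p, lo <= p < hi -> G p -> List.In (f p) S.
Proof.
suff image_upto n : exists S, (forall s, List.In s S -> exists p, G p /\ s = f p) /\
    forall p, lo <= p < lo + Z.of_nat n -> G p -> List.In (f p) S.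
  have [S [S_im S_all]] := image_upto (Z.to_nat (hi - lo)).
  by exists S; split=> // p p_bd; apply: S_all; lia.
elim: n => [|n [S [S_im S_all]]]; first by exists nil; split=> // p; lia.
case: (classic (G (lo + Z.of_nat n))) => [G_n|nG_n].
- exists (f (lo + Z.of_nat n) :: S); split.
    by move=> s [<-|/S_im //]; exists (lo + Z.of_nat n).
  move=> p p_bd Gp; case: (Z.eq_dec p (lo + Z.of_nat n)) => [->|ne]; first by left.
  by right; apply: S_all => //; lia.
- exists S; split=> // p p_bd Gp; apply: S_all => //.
  by case: (Z.eq_dec p (lo + Z.of_nat n)) => [e|ne]; [rewrite e in Gp | lia].
Qed.

Lemma list_maximal (T : Type) (R : T -> T -> Prop) (S : seq T) :
  S <> nil ->
  (forall x y z, List.In x S -> List.In y S -> List.In z S -> R x y -> R y z -> R x z) ->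
  exists m, List.In m S /\ forall s, List.In s S -> R m s -> R s m.
Proof.
elim: S => [|s0 S IH] // _ R_trans.
case: S IH R_trans => [|s1 S] IH R_trans; first by exists s0; split=> [|s [<-|[]]]; [left|].
have R_trans' x y z : List.In x (s1 :: S) -> List.In y (s1 :: S) -> List.In z (s1 :: S) ->
    R x y -> R y z -> R x z.
  by move=> Sx Sy Sz; apply: (R_trans x y z); try right.
have [m [Sm m_max]] := IH ltac:(discriminate) R_trans'.
case: (classic (R m s0 /\ ~ R s0 m)) => [[R_ms0 nR_s0m]|not_above].
- exists s0; split=> [|s [<-|Ss] R_s0s] //; first by left.
  have R_ms : R m s by apply: (R_trans m s0 s) => //=; auto.
  by apply: (R_trans s m s0) => //=; auto.
- exists m; split=> [|s [<-|Ss]]; [by right | | exact: m_max].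
  by move=> R_ms0; apply: NNPP => nR; apply: not_above.
Qed.

Section RayOrder.
Variables (L : Type) (next : L * bool -> L * bool -> Prop).
Implicit Types (f g : Z -> L * bool) (D E : Z -> Prop).

Definition ray_le f D g E :=
  forall n, 0 < n -> (forall k, 0 <= k < n -> D k /\ E k /\ f k = g k) ->
    D n -> E n -> f n <> g n -> (f n).2 = true.

Definition maximal_ray f D :=
  D 0 /\ (forall k, 0 <= k -> D k -> D (k + 1) -> next (f k) (f (k + 1))) /\
  (forall k, 0 <= k -> D k -> ~ D (k + 1) -> forall y, ~ next (f k) y).

Lemma eq_ray_le f D g E : (forall k, 0 <= k -> f k = g k) -> ray_le f D g E.
Proof. by move=> eq_fg n n_gt0 _ _ _ []; apply: eq_fg; lia. Qed.

Lemma ray_le_shift f D g E P K :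
  0 < P -> P <= K + 1 -> (forall k, 0 <= k -> g k = f (k + P)) ->
  (forall k, 0 <= k <= K -> (f k).2 = true) -> ray_le f D g E.
Proof.
move=> P_gt0 le_PK g_shift f_dir n n_gt0 agree _ _ _.
(* up to the split, f agrees with its own shift by P, so it repeats its
   first P letters, which are direct *)
suff f_dir_upto m : 0 <= m <= n -> (f m).2 = true by apply: f_dir_upto; lia.
elim/(well_founded_ind (Z.lt_wf 0)): m => m IH m_bd.
case: (Z_le_gt_dec m K) => [le_mK|gt_mK]; first by apply: f_dir; lia.
have [_ [_ e]] := agree (m - P) ltac:(lia).
rewrite g_shift in e; last lia.
by rewrite Z.sub_add in e; rewrite -e; apply: IH; lia.
Qed.

Hypothesis next_opposite :
  forall x y y', next x y -> next x y' -> y <> y' -> y.2 <> y'.2.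

Lemma ray_le_trans f1 D1 f2 D2 f3 D3 :
  maximal_ray f1 D1 -> maximal_ray f2 D2 -> f2 0 = f1 0 ->
  ray_le f1 D1 f2 D2 -> ray_le f2 D2 f3 D3 -> ray_le f1 D1 f3 D3.
Proof.
move=> [_ [next1 _]] [D2_0 [next2 end2]] e0 le12 le23 n n_gt0 agree13 D1n D3n neq13.
have D1_upto k : 0 <= k <= n -> D1 k.
  by move=> k_bd; case: (Z.eq_dec k n) => [->|?] //; case: (agree13 k ltac:(lia)).
have [|agree12|[k [k_bd [agree12 split12]]]] :=
  first_failure (P := fun j => D2 j /\ f2 j = f1 j) (n := n) _ (conj D2_0 e0); first lia.
- have [D2n e2n] := agree12 n ltac:(lia).
  rewrite -e2n; apply: le23; rewrite ?e2n //.
  move=> k k_bd; have [D2k e2k] := agree12 k ltac:(lia).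
  by have [_ [D3k <-]] := agree13 k k_bd; rewrite e2k.
have [D2k e2k] := agree12 k ltac:(lia).
have next1k : next (f1 k) (f1 (k + 1)) by apply: next1; try apply: D1_upto; lia.
have D2k1 : D2 (k + 1).
  by apply: NNPP => nD2; apply: (end2 k (proj1 k_bd) D2k nD2 (f1 (k + 1))); rewrite e2k.
have neq12 : f1 (k + 1) <> f2 (k + 1) by move=> e; apply: split12; rewrite e.
have dir1 : (f1 (k + 1)).2 = true.
  apply: le12 => //; [lia | | apply: D1_upto; lia].
  move=> j j_bd; have [D2j e2j] := agree12 j ltac:(lia).
  by split; [apply: D1_upto; lia | rewrite e2j].
case: (Z.eq_dec (k + 1) n) => [<-|ne] //; exfalso.
have [_ [D3k1 e3k1]] := agree13 (k + 1) ltac:(lia).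
have dir2 : (f2 (k + 1)).2 = true.
  apply: le23; rewrite -?e3k1 //; [lia | | by move/esym].
  move=> j j_bd; have [D2j e2j] := agree12 j ltac:(lia).
  by have [_ [D3j <-]] := agree13 j ltac:(lia); rewrite e2j.
have next2k : next (f1 k) (f2 (k + 1)) by rewrite -e2k; apply: next2 => //; lia.
by apply: (next_opposite next1k next2k) => //; rewrite dir1 dir2.
Qed.

End RayOrder.

Section MarkedWalks.
Variable B : bquiver.
Implicit Types (c w x y z : walk B).

Definition maximal_string c :=
  (forall l, in_dom c l -> in_dom c (l + 1) -> compat (wl c l) (wl c (l + 1))) /\
  (forall l, in_dom c l -> ~ in_dom c (l + 1) -> forall u, ~ compat (wl c l) u) /\
  (forall l, in_dom c l -> ~ in_dom c (l - 1) -> forall u, ~ compat u (wl c l)).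

Lemma in_dom_last c l : in_dom c l -> ~ in_dom c (l + 1) -> whi c = Some (l + 1).
Proof.
case: c => lo hi f; rewrite /in_dom /=.
by case: lo => [i|]; case: hi => [j|] /= dl ndl; try congr Some; lia.
Qed.

Lemma in_dom_first c l : in_dom c l -> ~ in_dom c (l - 1) -> wlo c = Some (l - 1).
Proof.
case: c => lo hi f; rewrite /in_dom /=.
by case: lo => [i|]; case: hi => [j|] /= dl ndl; try congr Some; lia.
Qed.

Lemma is_walk_maximal_string w : is_walk w -> maximal_string w.
Proof.
move=> [_ [next_w [last_w [first_w _]]]]; split=> //; split.
- move=> l dl ndl u; apply/negP.
  by have := last_w _ (in_dom_last dl ndl) u; rewrite Z.add_simpl_r.
- move=> l dl ndl u; apply/negP.
  by have := first_w _ (in_dom_first dl ndl) u; rewrite Z.sub_simpl_r.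
Qed.

Lemma wl_center w p l :
  wl (center w p) l = if (wl w p).2 then wl w (p + l) else linv (wl w (p - l)).
Proof. by rewrite /center; case: (wl w p).2. Qed.

Lemma in_dom_center w p l :
  in_dom (center w p) l <-> in_dom w (if (wl w p).2 then p + l else p - l).
Proof.
rewrite /center /in_dom; case: (wl w p).2 => /=;
  by case: (wlo w) => [i|]; case: (whi w) => [j|] /=; split=> -[? ?]; split; lia.
Qed.

Lemma maximal_string_center w p : maximal_string w -> maximal_string (center w p).
Proof.
move=> [next_w [last_w first_w]].
split; [|split]=> l; rewrite !in_dom_center !wl_center; case: (wl w p).2.
- by rewrite Z.add_assoc; apply: next_w.
- rewrite compat_linv !linvK (_ : p - l = p - (l + 1) + 1); last lia.
  by move=> dl dl1; apply: next_w.
- by rewrite Z.add_assoc; apply: last_w.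
- move=> dl ndl u; rewrite compat_linv linvK; apply: first_w => //.
  by rewrite (_ : p - l - 1 = p - (l + 1)); last lia.
- by rewrite (_ : p + (l - 1) = p + l - 1); [apply: first_w | lia].
- move=> dl ndl u; rewrite compat_linv linvK; apply: last_w => //.
  by rewrite (_ : p - l + 1 = p - (l - 1)); last lia.
Qed.

Definition marked_le x y :=
  ray_le (wl x) (in_dom x) (wl y) (in_dom y) /\
  ray_le (wl x \o Z.opp) (in_dom x \o Z.opp) (wl y \o Z.opp) (in_dom y \o Z.opp).

Lemma marked_le_refl x : marked_le x x.
Proof. by split; apply: eq_ray_le. Qed.

Lemma countercurrent_marked_le x y :
  countercurrent x y -> marked_le x y /\ ~ marked_le y x.
Proof.
move=> [_ [split_xy [right_dir left_dir]]]; split; first split.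
- move=> n n_gt0 agree dxn dyn neq; apply: (proj1 (right_dir n _)).
  by split=> //; split=> // k /agree[? [? ?]].
- move=> n n_gt0 agree dxn dyn neq; apply: (proj1 (left_dir (- n) _)).
  split; first lia; split=> //= k k_bd.
  by have := agree (- k) ltac:(lia); rewrite /= Z.opp_involutive.
case=> le_right le_left; case: split_xy => [[R sR]|[L sL]].
- have [_ dir_y] := right_dir R sR; case: sR => [R_gt0 [agree [dxR [dyR neq]]]].
  have agree_yx k : 0 <= k < R -> in_dom y k /\ in_dom x k /\ wl y k = wl x k.
    by move=> /agree[? [? ?]].
  by have := le_right R R_gt0 agree_yx dyR dxR (nesym neq); rewrite dir_y.
- have [_ dir_y] := left_dir L sL; case: sL => [L_lt0 [agree [dxL [dyL neq]]]].
  have agree_yx k : 0 <= k < - L -> in_dom y (- k) /\ in_dom x (- k) /\ wl y (- k) = wl x (- k).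
    by move=> k_bd; have [? [? ?]] := agree (- k) ltac:(lia).
  have := le_left (- L) ltac:(lia) agree_yx; rewrite /= Z.opp_involutive dir_y.
  by move/(_ dyL dxL (nesym neq)).
Qed.

Lemma maximal_string_rays c : maximal_string c -> in_dom c 0 ->
  maximal_ray (fun u v => compat u v) (wl c) (in_dom c) /\
  maximal_ray (fun u v => compat v u) (wl c \o Z.opp) (in_dom c \o Z.opp).
Proof.
move=> [next_c [last_c first_c]] dc0; split; split=> //; split=> k _ /=.
- exact: next_c.
- exact: last_c.
- have -> : - k = - (k + 1) + 1 by lia.
  by move=> dk dk1; apply: next_c.
- have -> : - (k + 1) = - k - 1 by lia.
  exact: first_c.
Qed.

Variables (F : seq (walk B)) (a : arr B).
Hypothesis F_walks : forall w, List.In w F -> is_walk w.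

Lemma marked_in_maximal_string x :
  marked_in F a x -> maximal_string x /\ in_dom x 0 /\ wl x 0 = (a, true).
Proof.
move=> [w [p [Fw [dp [wp_a ->]]]]]; split.
  by apply/maximal_string_center/is_walk_maximal_string/F_walks.
rewrite in_dom_center wl_center Z.add_0_r Z.sub_0_r; split; first by case: ifP.
by case: (wl w p) wp_a => u [] /= ->.
Qed.

Hypothesis gentle : locally_gentle B.

Lemma marked_le_trans x y z :
  marked_in F a x -> marked_in F a y -> marked_le x y -> marked_le y z -> marked_le x z.
Proof.
move=> /marked_in_maximal_string[sx [dx0 ex0]] /marked_in_maximal_string[sy [dy0 ey0]].
have [rx lx] := maximal_string_rays sx dx0; have [ry ly] := maximal_string_rays sy dy0.
move=> [le_xy_r le_xy_l] [le_yz_r le_yz_l]; split.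
- by apply: (ray_le_trans (compat_next_opposite gentle) rx ry) => //; rewrite ex0 ey0.
- by apply: (ray_le_trans (compat_prev_opposite gentle) lx ly) => //=; rewrite ex0 ey0.
Qed.

End MarkedWalks.

Section PeriodicTails.
Variable B : bquiver.
Implicit Types w : walk B.

Definition right_tail w N P d :=
  0 < P /\ forall l, N <= l -> in_dom w l /\ wl w (l + P) = wl w l /\ (wl w l).2 = d.

Definition left_tail w N P d :=
  0 < P /\ forall l, l <= N -> in_dom w l /\ wl w (l - P) = wl w l /\ (wl w l).2 = d.

Lemma is_walk_right_tail w :
  is_walk w -> whi w = None -> exists N P d, right_tail w N P d.
Proof.
move=> [_ [_ [_ [_ [periodic _]]]]] hi_w.
have [N [P [[loN _] [P_gt0 per]]]] := periodic hi_w.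
exists N, P, (wl w N).2; split=> // l le_Nl; have [? ?] := per l le_Nl.
split=> //; split; last by rewrite hi_w.
by move: loN; case: (wlo w) => [i|] /=; lia.
Qed.

Lemma is_walk_left_tail w :
  is_walk w -> wlo w = None -> exists N P d, left_tail w N P d.
Proof.
move=> [_ [_ [_ [_ [_ periodic]]]]] lo_w.
have [N [P [[_ hiN] [P_gt0 per]]]] := periodic lo_w.
exists N, P, (wl w N).2; split=> // l le_lN; have [? ?] := per l le_lN.
split=> //; split; first by rewrite lo_w.
by move: hiN; case: (whi w) => [j|] /=; lia.
Qed.

Lemma right_tail_step w N P d q :
  right_tail w N P d -> N + P <= q -> marked_le (center w q) (center w (q - P)).
Proof.
move=> [P_gt0 tail] le_q.
have [_ [per_q dir_qP]] := tail (q - P) ltac:(lia); rewrite Z.sub_add in per_q.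
have [_ [_ dir_q]] := tail q ltac:(lia).
rewrite /marked_le /=; case: d tail dir_qP dir_q => tail dir_qP dir_q.
- split.
  + apply: eq_ray_le => k k_ge0; rewrite !wl_center dir_q dir_qP.
    by have [_ [<- _]] := tail (q - P + k) ltac:(lia); congr wl; lia.
  + apply: (ray_le_shift (P := P) (K := q - N)) => //; first lia.
    * by move=> k _ /=; rewrite !wl_center dir_q dir_qP; congr wl; lia.
    * by move=> k k_bd /=; rewrite wl_center dir_q; have [_ [_ ->]] := tail (q + - k) ltac:(lia).
- split.
  + apply: (ray_le_shift (P := P) (K := q - N)) => //; first lia.
    * by move=> k _; rewrite !wl_center dir_q dir_qP; congr (linv (wl _ _)); lia.
    * move=> k k_bd; rewrite wl_center dir_q /linv /=.
      by have [_ [_ ->]] := tail (q - k) ltac:(lia).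
  + apply: eq_ray_le => k k_ge0 /=; rewrite !wl_center dir_q dir_qP.
    by have [_ [<- _]] := tail (q - P - - k) ltac:(lia); congr (linv (wl _ _)); lia.
Qed.

Lemma left_tail_step w N P d q :
  left_tail w N P d -> q + P <= N -> marked_le (center w q) (center w (q + P)).
Proof.
move=> [P_gt0 tail] le_q.
have [_ [per_q dir_qP]] := tail (q + P) ltac:(lia); rewrite Z.add_simpl_r in per_q.
have [_ [_ dir_q]] := tail q ltac:(lia).
rewrite /marked_le /=; case: d tail dir_qP dir_q => tail dir_qP dir_q.
- split.
  + apply: (ray_le_shift (P := P) (K := N - q)) => //; first lia.
    * by move=> k _; rewrite !wl_center dir_q dir_qP; congr wl; lia.
    * by move=> k k_bd; rewrite wl_center dir_q; have [_ [_ ->]] := tail (q + k) ltac:(lia).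
  + apply: eq_ray_le => k k_ge0 /=; rewrite !wl_center dir_q dir_qP.
    by have [_ [<- _]] := tail (q + P + - k) ltac:(lia); congr wl; lia.
- split.
  + apply: eq_ray_le => k k_ge0; rewrite !wl_center dir_q dir_qP.
    by have [_ [<- _]] := tail (q + P - k) ltac:(lia); congr (linv (wl _ _)); lia.
  + apply: (ray_le_shift (P := P) (K := N - q)) => //; first lia.
    * by move=> k _ /=; rewrite !wl_center dir_q dir_qP; congr (linv (wl _ _)); lia.
    * move=> k k_bd /=; rewrite wl_center dir_q /linv /=.
      by have [_ [_ ->]] := tail (q - - k) ltac:(lia).
Qed.

End PeriodicTails.

Section Domination.
Variables (B : bquiver) (F : seq (walk B)) (a : arr B).
Hypotheses (F_walks : forall w, List.In w F -> is_walk w) (gentle : locally_gentle B).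
Implicit Types w : walk B.

Definition marked_at w q := in_dom w q /\ (wl w q).1 = a.

Lemma marked_at_center w q : List.In w F -> marked_at w q -> marked_in F a (center w q).
Proof. by move=> Fw [dq wq_a]; exists w, q. Qed.

Lemma center_marked_le_trans w : List.In w F -> forall q1 q2 q3,
  marked_at w q1 -> marked_at w q2 ->
  marked_le (center w q1) (center w q2) -> marked_le (center w q2) (center w q3) ->
  marked_le (center w q1) (center w q3).
Proof.
move=> Fw q1 q2 q3 /(marked_at_center Fw) m1 /(marked_at_center Fw) m2.
exact: (marked_le_trans F_walks gentle m1 m2).
Qed.

Lemma right_window w : List.In w F -> exists N hi, forall q, marked_at w q ->
  exists p, Z.min q N <= p <= q /\ p < hi /\ marked_at w p /\
    marked_le (center w q) (center w p).
Proof.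
move=> Fw; case hi_w: (whi w) => [j|].
  exists j, j => q mq; exists q.
  have lt_qj : q < j by case: mq => -[_]; rewrite hi_w.
  by split; [lia | split=> //; split=> //; apply: marked_le_refl].
have [N [P [d tail]]] := is_walk_right_tail (F_walks Fw) hi_w.
have P_gt0 := proj1 tail.
exists N, (N + P) => q mq; case: (Z_lt_le_dec q (N + P)) => [lt_q|ge_q].
  by exists q; split; [lia | split=> //; split=> //; apply: marked_le_refl].
have step k : N + P <= k -> marked_at w k ->
    marked_at w (k - P) /\ marked_le (center w k) (center w (k - P)).
  move=> le_k [_ wk_a]; have [dkP [per _]] := proj2 tail (k - P) ltac:(lia).
  rewrite Z.sub_add in per; split; first by split; rewrite // -per.
  exact: right_tail_step tail le_k.
have [p [p_bd [le_p [mp le_qp]]]] :=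
  periodic_descent P_gt0 (fun k => marked_le_refl (center w k))
    (center_marked_le_trans Fw) step (ltac:(lia) : N <= q) mq.
by exists p; split; [lia | split; [lia | split]].
Qed.

Lemma left_window w : List.In w F -> exists lo, forall q, marked_at w q ->
  exists p, q <= p /\ lo <= p /\ marked_at w p /\ marked_le (center w q) (center w p).
Proof.
move=> Fw; case lo_w: (wlo w) => [i|].
  exists (i + 1) => q mq; exists q.
  have lt_iq : i < q by case: mq => -[]; rewrite lo_w.
  by split; [lia | split; [lia | split=> //; apply: marked_le_refl]].
have [N [P [d tail]]] := is_walk_left_tail (F_walks Fw) lo_w.
have P_gt0 := proj1 tail.
exists (N - P + 1) => q mq; case: (Z_lt_le_dec (N - P) q) => [lt_q|le_q].
  by exists q; split; [lia | split; [lia | split=> //; apply: marked_le_refl]].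
have step k : - N + P <= k -> marked_at w (- k) ->
    marked_at w (- (k - P)) /\ marked_le (center w (- k)) (center w (- (k - P))).
  move=> le_k [_ wk_a]; rewrite (_ : - (k - P) = - k + P); last lia.
  have [dkP [per _]] := proj2 tail (- k + P) ltac:(lia).
  rewrite Z.add_simpl_r in per; split; first by split; rewrite // -per.
  by apply: left_tail_step tail _; lia.
have [p [p_bd [le_p [mp le_qp]]]] :=
  periodic_descent (G := marked_at w \o Z.opp)
    (R := fun k k' => marked_le (center w (- k)) (center w (- k'))) P_gt0
    (fun k => marked_le_refl (center w (- k)))
    (fun k1 k2 k3 => @center_marked_le_trans w Fw (- k1) (- k2) (- k3)) step
    (ltac:(lia) : - N <= - q) (ltac:(by rewrite /= Z.opp_involutive)).
rewrite /= Z.opp_involutive in le_qp.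
by exists (- p); split; [lia | split; [lia | split]].
Qed.

Lemma marked_window w : List.In w F -> exists lo hi, forall q, marked_at w q ->
  exists p, lo <= p < hi /\ marked_at w p /\ marked_le (center w q) (center w p).
Proof.
move=> Fw; have [N [hi right]] := right_window Fw; have [lo left] := left_window Fw.
exists (Z.min lo N), hi => q mq.
have [p1 [le_qp1 [le_lop1 [mp1 le_q_p1]]]] := left q mq.
have [p2 [p2_bd [lt_p2 [mp2 le_p1_p2]]]] := right p1 mp1.
exists p2; split; first lia; split=> //.
exact: center_marked_le_trans Fw _ _ _ mq mp1 le_q_p1 le_p1_p2.
Qed.

Lemma finite_dominating_set : exists S, (forall s, List.In s S -> marked_in F a s) /\
  forall x, marked_in F a x -> exists s, List.In s S /\ marked_le x s.
Proof.
suff dominate G : (forall w, List.In w G -> List.In w F) ->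
    exists S, (forall s, List.In s S -> marked_in F a s) /\
      forall w q, List.In w G -> marked_at w q -> exists s, List.In s S /\ marked_le (center w q) s.
  have [S [S_marked S_dom]] := dominate F (fun w Fw => Fw).
  by exists S; split=> // x [w [q [Fw [dq [wq_a ->]]]]]; apply: S_dom.
elim: G => [|w G IH] GF; first by exists nil; split=> // w q [].
have [S [S_marked S_dom]] := IH (fun v Gv => GF v (or_intror Gv)).
have Fw : List.In w F := GF w (or_introl erefl).
have [lo [hi win]] := marked_window Fw.
have [Sw [Sw_im Sw_all]] := interval_image (marked_at w) (center w) lo hi.
exists (Sw ++ S)%list; split.
  move=> s Ss; case: (List.in_app_or _ _ _ Ss) => [Sw_s|S_s]; last exact: S_marked.
  by have [p [mp ->]] := Sw_im s Sw_s; apply: marked_at_center.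
move=> v q [<-|Gv] mq.
  have [p [p_bd [mp le_qp]]] := win q mq.
  by exists (center w p); split=> //; apply: List.in_or_app; left; apply: Sw_all.
have [s [Ss le_qs]] := S_dom v q Gv mq.
by exists s; split=> //; apply: List.in_or_app; right.
Qed.

End Domination.

Theorem lemma5p7 (Q Qbl : bquiver) (iv : vert Q -> vert Qbl) (ia : arr Q -> arr Qbl)
    (F : seq (walk Qbl)) (a : arr Qbl) :
  locally_gentle Q -> is_blossoming iv ia -> is_face F ->
  (forall m, ~ marked_in F a m) \/
  (exists m, marked_in F a m /\ forall x, marked_in F a x -> ~ countercurrent m x).
Proof.
move=> _ [_ [_ [_ [_ [_ [_ [_ [_ gentle]]]]]]]] [F_walks _].
case: (classic (exists m, marked_in F a m)) => [[x0 mx0]|none]; last first.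
  by left=> m mm; apply: none; exists m.
right; have [S [S_marked S_dom]] := finite_dominating_set a F_walks gentle.
have [s0 [S_s0 _]] := S_dom x0 mx0.
have S_nonempty : S <> nil by move=> S_nil; rewrite S_nil in S_s0.
have [m [S_m m_max]] := list_maximal S_nonempty
  (fun x y z Sx Sy _ => marked_le_trans F_walks gentle (S_marked x Sx) (S_marked y Sy)).
exists m; split; first exact: S_marked.
move=> x mx /countercurrent_marked_le[le_mx not_le_xm].
have [s [S_s le_xs]] := S_dom x mx.
have le_ms : marked_le m s := marked_le_trans F_walks gentle (S_marked m S_m) mx le_mx le_xs.
have le_sm : marked_le s m := m_max s S_s le_ms.
exact/not_le_xm/(marked_le_trans F_walks gentle mx (S_marked s S_s) le_xs le_sm).
Qed.
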